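(* Let $X$ be a compact metric space with metric $d$, let $\mathbb{G}$ be a locally compact Abelian group acting jointly continuously on $X$, and let $\mathrm{x}\in X$ be a transitive point (its $\mathbb{G}$-orbit is dense in $X$). For $\varepsilon>0$ let $P_\varepsilon=\{t\in\mathbb{G}: d(t.\mathrm{x},\mathrm{x})<\varepsilon\}$. Then the following are equivalent: (1) each $P_\varepsilon$ is relatively dense in $\mathbb{G}$, and for each $\varepsilon>0$ there is $\delta>0$ with $P_\delta-P_\delta\subseteq P_\varepsilon$; (2) $(X,\mathbb{G})$ is almost automorphic, with $\mathrm{x}$ an almost automorphic point.
   Context: A factor map $\pi:(X,\mathbb{G})\to(Y,\mathbb{G})$ is a continuous surjective map with $\pi(t.x)=t.\pi(x)$ for all $x,t$. The maximal equicontinuous factor $(X_{eq},\mathbb{G})$ of $(X,\mathbb{G})$ is the greatest factor whose $\mathbb{G}$-action is equicontinuous (unique up to conjugacy), with factor map $\pi:X\to X_{eq}$. The system $(X,\mathbb{G})$ is almost automorphic if $\pi$ is one-to-one over some point of $X_{eq}$; a point $x\in X$ is an almost automorphic point if $\pi^{-1}(\pi(x))=\{x\}$. *)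

From HB Require Import structures.
From mathcomp Require Import all_boot all_order all_algebra.
From mathcomp Require Import all_classical all_reals all_analysis.
Set Implicit Arguments. Unset Strict Implicit. Unset Printing Implicit Defensive.
Import Order.TTheory GRing.Theory Num.Theory.
Local Open Scope classical_set_scope.
Local Open Scope ring_scope.

Definition is_action (G : topologicalZmodType) (T : topologicalType)
  (act : G -> T -> T) : Prop :=
  (forall x, act 0 x = x) /\
  (forall s t x, act (s + t) x = act s (act t x)) /\
  continuous (fun p : G * T => act p.1 p.2).

Definition factor_map (G : topologicalZmodType) (T U : topologicalType)
  (actT : G -> T -> T) (actU : G -> U -> U) (pi : T -> U) : Prop :=
  continuous pi /\ (forall u, exists x, pi x = u) /\
  (forall t x, pi (actT t x) = actU t (pi x)).

Definition equicontinuous_action (G : topologicalZmodType) (U : uniformType)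
  (act : G -> U -> U) : Prop :=
  forall E, entourage E -> exists2 D, entourage D &
    forall y z, D (y, z) -> forall t, E (act t y, act t z).

Definition equicontinuous_factor (G : topologicalZmodType) (X : topologicalType)
  (actX : G -> X -> X) (Y : uniformType) (actY : G -> Y -> Y) (pi : X -> Y) : Prop :=
  compact [set: Y] /\ hausdorff_space Y /\ is_action actY /\
  equicontinuous_action actY /\ factor_map actX actY pi.

Definition maximal_equicontinuous_factor (G : topologicalZmodType)
  (X : topologicalType) (actX : G -> X -> X)
  (Y : uniformType) (actY : G -> Y -> Y) (pi : X -> Y) : Prop :=
  equicontinuous_factor actX actY pi /\
  forall (Z : uniformType) (actZ : G -> Z -> Z) (psi : X -> Z),
    equicontinuous_factor actX actZ psi ->
    exists phi : Y -> Z, factor_map actY actZ phi /\ (forall x, psi x = phi (pi x)).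

Definition relatively_dense (G : topologicalZmodType) (P : set G) : Prop :=
  exists K : set G, compact K /\
    forall t : G, exists p k, P p /\ K k /\ t = p + k.

Definition return_set (R : realType) (G : topologicalZmodType) (X : metricType R)
  (act : G -> X -> X) (x : X) (eps : R) : set G :=
  [set t | mdist (act t x) x < eps].

(* The return sets define a uniformity on X: x and y are
   W_e-close when orbit points s.x0 near x and t.x0 near y always satisfy
   s - t \in P_e.  Relative density of the return sets makes W_e reflexive
   (through uniform continuity of the action over a compact K with P + K = G),
   and P_d - P_d \subset P_e gives symmetry and the triangle inequality.  The
   Hausdorff quotient of X for this G-invariant uniformity is an equicontinuous
   factor; it is maximal because every equicontinuous factor map is uniformly
   continuous for the W_e, and the fiber of x0 is trivial because W_e-closeness
   to x0 forces d-closeness.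
   (2) => (1).  As the fiber of x0 is a singleton and X is compact, some
   entourage E of Y satisfies E (pi x0, pi x) -> d (x, x0) < e.  Equicontinuity
   transports closeness of pi (s.x0) and pi (t.x0) to closeness of
   pi ((s - t).x0) and pi x0, which gives P_d - P_d \subset P_e, and a finite
   cover of the compact Y by translates of a small entourage gives a finite
   K with P_e + K = G. *)
From HB Require Import structures.
From mathcomp Require Import all_boot all_order all_algebra.
From mathcomp Require Import all_classical all_reals all_analysis.
From mathcomp Require Import lra.
Import Order.TTheory GRing.Theory Num.Theory.
Local Open Scope classical_set_scope.
Local Open Scope ring_scope.
Set Implicit Arguments. Unset Strict Implicit. Unset Printing Implicit Defensive.

(* Splitting into three steps rather than two is what survives the passage
   to the quotient, where each image entourage hides two equivalences. *)
Record diag_base (T : Type) := DiagBase {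
  dbase : set (set (T * T));
  dbase_nonempty : exists b, dbase b;
  dbase_meet : forall b1 b2, dbase b1 -> dbase b2 ->
    exists2 b, dbase b & b `<=` b1 `&` b2;
  dbase_refl : forall b, dbase b -> forall x, b (x, x);
  dbase_inv : forall b, dbase b ->
    exists2 b', dbase b' & forall x y, b' (x, y) -> b (y, x);
  dbase_split3 : forall b, dbase b -> exists2 b', dbase b' &
    forall x y z w, b' (x, y) -> b' (y, z) -> b' (z, w) -> b (x, w) }.

Section HausdorffQuotient.
Context {T : Type} (B : diag_base T).
Local Notation Bs := (dbase B).

Definition dbase_rel (x y : T) := forall b, Bs b -> b (x, y).

Lemma dbase_rel_refl x : dbase_rel x x.
Proof. by move=> b Bb; exact: dbase_refl Bb x. Qed.

Lemma dbase_rel_sym x y : dbase_rel x y -> dbase_rel y x.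
Proof. by move=> xy b /dbase_inv[b' Bb' b'b]; apply: b'b; exact: xy. Qed.

Lemma dbase_rel_trans x y z : dbase_rel x y -> dbase_rel y z -> dbase_rel x z.
Proof.
move=> xy yz b /dbase_split3[b' Bb' b'b].
by apply: (b'b x y z z); [exact: xy | exact: yz | exact: dbase_refl Bb' z].
Qed.

Record dbase_quot := DQuot { dq_class : set T ; dq_classP : exists x, dq_class = dbase_rel x }.

HB.instance Definition _ := gen_eqMixin dbase_quot.
HB.instance Definition _ := gen_choiceMixin dbase_quot.

Definition dbase_pi (x : T) : dbase_quot := DQuot (ex_intro _ x erefl).

Lemma dq_class_inj (p q : dbase_quot) : dq_class p = dq_class q -> p = q.
Proof.
case: p q => [A pA] [A' pA'] /= AA'; subst A'.
by congr DQuot; exact: Prop_irrelevance.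
Qed.

Lemma dbase_piP x y : dbase_pi x = dbase_pi y <-> dbase_rel x y.
Proof.
split; first by move=> /(congr1 dq_class) /= ->; exact: dbase_rel_refl.
move=> xy; apply: dq_class_inj; apply/funext => z; apply/propext; split.
  exact: dbase_rel_trans (dbase_rel_sym xy).
exact: dbase_rel_trans.
Qed.

Lemma dbase_pi_surj (q : dbase_quot) : exists x, q = dbase_pi x.
Proof. by case: q => A [x Ax]; exists x; exact: dq_class_inj. Qed.

Definition dbase_img (b : set (T * T)) : set (dbase_quot * dbase_quot) :=
  [set pq | exists x y, pq.1 = dbase_pi x /\ pq.2 = dbase_pi y /\ b (x, y)].

Lemma dbase_img_pi b x y : b (x, y) -> dbase_img b (dbase_pi x, dbase_pi y).
Proof. by move=> bxy; exists x, y. Qed.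

Lemma dbase_img_sub b : Bs b -> exists2 b', Bs b' &
  forall x y, dbase_img b' (dbase_pi x, dbase_pi y) -> b (x, y).
Proof.
move=> /dbase_split3[b' Bb' b'b]; exists b' => // x y [x' [y' [/= xx' [yy' b'xy]]]].
move/dbase_piP : xx' => xx'; move/dbase_piP : yy' => yy'.
by apply: (b'b x x' y' y) => //; [exact: xx' | exact: dbase_rel_sym yy' _ Bb'].
Qed.

Definition dquot_ent : set_system (dbase_quot * dbase_quot) := filter_from Bs dbase_img.

Lemma dquot_ent_filter : Filter dquot_ent.
Proof.
apply: filter_from_filter; first exact: dbase_nonempty.
move=> b1 b2 Bb1 Bb2; have [b Bb bb12] := dbase_meet Bb1 Bb2; exists b => //.
by move=> [p q] [x [y [px [qy /bb12[b1xy b2xy]]]]]; split; exists x, y.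
Qed.

Lemma dquot_ent_diag A : dquot_ent A -> diagonal `<=` A.
Proof.
move=> [b Bb bA] [p q]; rewrite /diagonal /= => <-; apply: bA; have [x ->] := dbase_pi_surj p.
by exists x, x; do 2 split => //; exact: dbase_refl Bb x.
Qed.

Lemma dquot_ent_inv A : dquot_ent A -> dquot_ent A^-1%relation.
Proof.
move=> [b /dbase_inv[b' Bb' b'b] bA]; exists b' => // -[p q] [x [y [px [qy b'xy]]]].
by apply: bA; exists y, x; do 2 split => //; exact: b'b.
Qed.

Lemma dquot_ent_split A : dquot_ent A -> exists2 C, dquot_ent C & (C \; C `<=` A)%relation.
Proof.
move=> [b /dbase_split3[b' Bb' b'b] bA]; exists (dbase_img b'); first by exists b'.
move=> [p r] [q /= [x [y [px [qy b'xy]]]] [y' [z [qy' [rz b'yz]]]]].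
apply: bA; exists x, z; do 2 split => //.
have /dbase_piP yy' : dbase_pi y = dbase_pi y' by rewrite -qy -qy'.
by apply: (b'b x y y') => //; exact: yy' _ Bb'.
Qed.

HB.instance Definition _ :=
  isUniform.Build dbase_quot dquot_ent_filter dquot_ent_diag dquot_ent_inv dquot_ent_split.

Lemma dquot_hausdorff : hausdorff_space dbase_quot.
Proof.
move=> p q; have [x ->] := dbase_pi_surj p; have [y ->] := dbase_pi_surj q.
rewrite -closeEnbhs entourage_close => pq.
apply/dbase_piP => b /dbase_img_sub[b' Bb' b'b]; apply: b'b; apply: pq.
by exists b'.
Qed.

End HausdorffQuotient.

Lemma entourage_common_point (Y : uniformType) (D : set (Y * Y)) : entourage D ->
  exists2 D1, entourage D1 & forall p a b, D1 (p, a) -> D1 (p, b) -> D (a, b).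
Proof.
move=> entD; exists (split_ent D `&` (split_ent D)^-1%relation).
  by apply: filterI; [exact: entourage_split_ent | exact: entourage_inv (entourage_split_ent entD)].
by move=> p a b [_ pa] [pb _]; exact: (entourage_split p entD pa pb).
Qed.

Lemma compact_finite_net (I : Type) (Y : uniformType) (f : I -> Y) :
    compact [set: Y] -> (forall (y : Y) A, nbhs y A -> exists i, A (f i)) ->
  forall D, entourage D ->
    exists2 A0 : set I, finite_set A0 & forall y, exists2 i, A0 i & D (f i, y).
Proof.
move=> /compact_near_coveringP cov f_dense D entD.
have entD2 := entourage_split_ent entD.
pose F := filter_from [set A : set I | finite_set A]
  (fun A => [set S : set I | A `<=` S /\ finite_set S]).
have F_filter : Filter F.
  apply: filter_from_filter; first by exists set0; exact: finite_set0.
  move=> A B fA fB; exists (A `|` B); first by rewrite /= finite_setU.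
  by move=> S [ABS fS]; split; split => //; apply: subset_trans ABS.
have near_y y : [set: Y] y -> \forall y' \near y & S \near F,
    exists2 i, S i & D (f i, y').
  move=> _; have [i /xsectionP iy] := f_dense _ _ (nbhs_entourage y (entourage_inv entD2)).
  exists (xsection (split_ent D) y, [set S | [set i] `<=` S /\ finite_set S]).
    by split; [exact: nbhs_entourage | exists [set i]; [exact: finite_set1 |]].
  move=> [y' S] /= [/xsectionP yy' [iS _]]; exists i; first exact: iS.
  exact: (entourage_split y entD iy yy').
have [A0 fA0 A0net] := cov _ F _ F_filter near_y.
by exists A0 => // y; exact: (A0net A0 (conj (@subset_refl _ A0) fA0) y).
Qed.

Section MetricFacts.
Variable R : realType.

Lemma nbhs_mdist (X : metricType R) (x : X) e : 0 < e -> nbhs x [set y | mdist x y < e].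
Proof. by move=> e0; rewrite -ballEmdist; exact: nbhsx_ballx. Qed.

Lemma nbhs_mdist_sub (X : metricType R) (x : X) (A : set X) :
  nbhs x A -> exists2 e, 0 < e & forall y, mdist x y < e -> A y.
Proof.
by move=> /metricType_numDomainType.nbhs_mdistP[e /= e0 eA]; exists e => // y /eA.
Qed.

Lemma compact_equicontinuous_at (T : topologicalType) (X Y : metricType R)
    (f : T * X -> Y) (K : set T) : continuous f -> compact K ->
  forall x eta, 0 < eta -> exists2 d, 0 < d &
    forall k y, K k -> mdist x y < d -> mdist (f (k, x)) (f (k, y)) < eta.
Proof.
move=> fc /compact_near_coveringP cov x eta eta0.
have near_k k : K k -> \forall k' \near k & y \near x, mdist (f (k', x)) (f (k', y)) < eta.
  move=> _; have eta20 : 0 < eta / 2 by rewrite divr_gt0.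
  have [[A B] /= [nA nB] AB] := fc (k, x) _ (nbhs_mdist (f (k, x)) eta20).
  exists (A, B) => // -[k' y] [/= Ak' By].
  have := AB (k', x) (conj Ak' (nbhs_singleton nB)).
  have := AB (k', y) (conj Ak' By); rewrite /= => fy fx.
  apply: le_lt_trans (metric_triangle _ (f (k, x)) _) _.
  by rewrite metric_sym; lra.
have [d d0 dK] := nbhs_mdist_sub
  (cov X (nbhs x) (fun y k => mdist (f (k, x)) (f (k, y)) < eta) _ near_k).
by exists d => // k y Kk /dK; exact.
Qed.

Lemma compact_fiber_entourage (X : metricType R) (Y : uniformType) (pi : X -> Y)
    (x0 : X) : compact [set: X] -> hausdorff_space Y -> continuous pi ->
    (forall x, pi x = pi x0 -> x = x0) ->
  forall e, 0 < e -> exists2 E, entourage E & forall x, E (pi x0, pi x) -> mdist x x0 < e.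
Proof.
move=> /compact_near_coveringP cov Y_hausdorff pi_cont fiber e e0.
pose F := filter_from (@entourage Y) (fun A => [set E : set (Y * Y) | E `<=` A]).
have F_filter : Filter F.
  apply: filter_from_filter; first by exists setT; exact: entourageT.
  move=> A B entA entB; exists (A `&` B); first exact: filterI.
  by move=> E sE; split => z /sE [].
have near_x x : [set: X] x -> \forall x' \near x & E \near F,
    E (pi x0, pi x') -> mdist x' x0 < e.
  move=> _; have [xx0|xx0] := ltP (mdist x x0) e.
    have r0 : 0 < e - mdist x x0 by rewrite subr_gt0.
    exists ([set y | mdist x y < e - mdist x x0], setT) => /=.
      by split; [exact: nbhs_mdist | exists setT => //; exact: entourageT].
    move=> [x' E] /= [xx' _] _; have := metric_triangle x' x x0.
    by rewrite metric_sym in xx'; lra.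
  have [A entA nA] : exists2 A, entourage A & ~ A (pi x0, pi x).
    apply: contrapT => h; suff /esym/fiber xx0' : pi x0 = pi x.
      by rewrite xx0' mdistxx in xx0; lra.
    rewrite -(closeE Y_hausdorff) entourage_close => A entA.
    by apply: contrapT => nA; apply: h; exists A.
  have entA2 := entourage_split_ent entA.
  have /cvg_app_entourageP/(_ _ (entourage_inv entA2)) nx := pi_cont x.
  exists ([set x' | (split_ent A)^-1%relation (pi x, pi x')], [set E | E `<=` split_ent A]).
    by split; [exact: nx | exists (split_ent A)].
  move=> [x' E] /= [xx' EA] /EA x0x'; exfalso; apply: nA.
  exact: (entourage_split (pi x') entA x0x' xx').
have [E entE Ee] := cov _ F _ F_filter near_x.
by exists E => // x; apply: (Ee E).
Qed.

End MetricFacts.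

Section Action.
Context (G : topologicalZmodType) (T : topologicalType) (act : G -> T -> T).
Hypothesis act_action : is_action act.

Lemma act0 x : act 0 x = x. Proof. by case: act_action. Qed.
Lemma actD s t x : act (s + t) x = act s (act t x). Proof. by case: act_action => _ []. Qed.
Lemma actNK t x : act (- t) (act t x) = x. Proof. by rewrite -actD addNr act0. Qed.

Lemma act_jointly_continuous : continuous (fun p : G * T => act p.1 p.2).
Proof. by case: act_action => _ []. Qed.

Lemma act_continuous t : continuous (act t).
Proof.
move=> x; apply: (@continuous_comp _ _ _ (pair t) (fun p : G * T => act p.1 p.2)).
  by apply: cvg_pair; [exact: cvg_cst | exact: cvg_id].
exact: act_jointly_continuous.
Qed.

Lemma orbit_map_continuous x : continuous (act^~ x).
Proof.
move=> g; apply: (@continuous_comp _ _ _ (pair^~ x) (fun p : G * T => act p.1 p.2)).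
  by apply: cvg_pair; [exact: cvg_id | exact: cvg_cst].
exact: act_jointly_continuous.
Qed.

End Action.

Section ReturnUniformity.
Context (R : realType) (G : topologicalZmodType) (X : metricType R)
  (act : G -> X -> X) (x0 : X).
Hypothesis act_action : is_action act.
Hypothesis x0_transitive : closure (range (fun t => act t x0)) = [set: X].
Hypothesis return_dense : forall e : R, 0 < e -> relatively_dense (return_set act x0 e).
Hypothesis return_sub : forall e : R, 0 < e -> exists2 d : R, 0 < d &
  forall s t, return_set act x0 d s -> return_set act x0 d t -> return_set act x0 e (s - t).

Local Notation P := (return_set act x0).

Lemma orbit_approx x e : 0 < e -> exists t, mdist (act t x0) x < e.
Proof.
move=> e0; have : closure (range (fun t => act t x0)) x by rewrite x0_transitive.
move=> /(_ _ (nbhs_mdist x e0)) [_ [[t _ <-] /= xt]].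
by exists t; rewrite metric_sym.
Qed.

Lemma return_set0 e : 0 < e -> P e 0.
Proof. by move=> e0; rewrite /return_set /= act0 // mdistxx. Qed.

Lemma return_set_le e1 e2 g : e1 <= e2 -> P e1 g -> P e2 g.
Proof. by move=> e12 /lt_le_trans; apply. Qed.

Lemma return_setN e : 0 < e -> exists2 d, 0 < d & forall g, P d g -> P e (- g).
Proof.
move=> e0; have [d d0 Pd] := return_sub e0; exists d => // g Pg.
by rewrite -sub0r; apply: Pd => //; exact: return_set0.
Qed.

Lemma return_setD e : 0 < e -> exists2 d, 0 < d & forall a b, P d a -> P d b -> P e (a + b).
Proof.
move=> e0; have [d1 d10 Pd1] := return_sub e0; have [d2 d20 Pd2] := return_setN d10.
exists (Num.min d1 d2); first by rewrite lt_min d10 d20.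
move=> a b Pa Pb; rewrite -[b]opprK; apply: Pd1.
  by apply: return_set_le Pa; rewrite ge_min lexx.
by apply: Pd2; apply: return_set_le Pb; rewrite ge_min lexx orbT.
Qed.

Definition return_ent (e : R) : set (X * X) :=
  [set xy | exists2 d, 0 < d & forall s t, mdist (act s x0) xy.1 < d ->
     mdist (act t x0) xy.2 < d -> P e (s - t)].

Lemma return_ent_le e1 e2 xy : e1 <= e2 -> return_ent e1 xy -> return_ent e2 xy.
Proof.
move=> e12 [d d0 Wd]; exists d => // s t xs yt; exact: return_set_le e12 (Wd s t xs yt).
Qed.

(* Write s = p + k with p \in P and k in a compact K; uniform continuity of the
   action of -k over K brings both (s - k).x0 = p.x0 and (t - k).x0 close
   to (-k).x, so s - t = p - (t - k) is a difference of two return times. *)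
Lemma return_ent_refl e x : 0 < e -> return_ent e (x, x).
Proof.
move=> e0; have [d1 d10 Pd1] := return_sub e0.
have eta0 : 0 < d1 / 3 by rewrite divr_gt0.
have [K [cK PK]] := return_dense eta0.
have actN_cont : continuous (fun p : G * X => act (- p.1) p.2).
  move=> p; apply: (@continuous_comp _ _ _ (fun q : G * X => (- q.1, q.2))
     (fun q : G * X => act q.1 q.2)); last exact: act_jointly_continuous.
  apply: cvg_pair; last exact: cvg_snd.
  by apply: continuous_comp; [exact: cvg_fst | exact: opp_continuous].
have [d d0 Kd] := compact_equicontinuous_at actN_cont cK x eta0.
exists d => // s t /= xs xt; have [p [k [Pp [Kk s_pk]]]] := PK s; subst s.
rewrite metric_sym in xs; rewrite metric_sym in xt.
have -> : p + k - t = p - (t - k) by rewrite opprB addrA.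
apply: Pd1; first by apply: return_set_le Pp; lra.
have /= Pk := Kd _ _ Kk xs; have /= Tk := Kd _ _ Kk xt.
rewrite addrC actD // actNK // in Pk; rewrite /return_set /= addrC actD //.
have := metric_triangle (act (- k) (act t x0)) (act (- k) x) x0.
have := metric_triangle (act (- k) x) (act p x0) x0.
rewrite metric_sym in Tk; move: Pp; rewrite /return_set /=; lra.
Qed.

Lemma return_ent_inv e : 0 < e ->
  exists2 e', 0 < e' & forall x y, return_ent e' (x, y) -> return_ent e (y, x).
Proof.
move=> e0; have [d d0 PN] := return_setN e0; exists d => // x y [dl dl0 Wxy].
by exists dl => // s t /= ys xt; rewrite -opprB; apply: PN; exact: Wxy.
Qed.

Lemma return_ent_split3 e : 0 < e -> exists2 e', 0 < e' & forall x y z w,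
  return_ent e' (x, y) -> return_ent e' (y, z) -> return_ent e' (z, w) ->
  return_ent e (x, w).
Proof.
move=> e0; have [d1 d10 PD1] := return_setD e0; have [d2 d20 PD2] := return_setD d10.
exists (Num.min d1 d2); first by rewrite lt_min d10 d20.
move=> x y z w [a a0 Wxy] [b b0 Wyz] [c c0 Wzw].
exists (Num.min a c); first by rewrite lt_min a0 c0.
move=> s t /=; rewrite !lt_min => /andP[xs _] /andP[_ wt].
have [r1] := orbit_approx y (ltac:(by rewrite lt_min a0 b0) : 0 < Num.min a b).
have [r2] := orbit_approx z (ltac:(by rewrite lt_min b0 c0) : 0 < Num.min b c).
rewrite !lt_min => /andP[zr2b zr2c] /andP[yr1a yr1b].
have -> : s - t = (s - r1) + (r1 - r2) + (r2 - t) by rewrite !addrA !subrK.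
have le_min_l : Num.min d1 d2 <= d1 by rewrite ge_min lexx.
have le_min_r : Num.min d1 d2 <= d2 by rewrite ge_min lexx orbT.
apply: PD1; first apply: PD2.
- exact: return_set_le le_min_r (Wxy s r1 xs yr1a).
- exact: return_set_le le_min_r (Wyz r1 r2 yr1b zr2b).
- exact: return_set_le le_min_l (Wzw r2 t zr2c wt).
Qed.

Lemma return_ent_nbhs e x : 0 < e ->
  exists2 eta, 0 < eta & forall y, mdist x y < eta -> return_ent e (x, y).
Proof.
move=> e0; have [d d0 Wxx] := return_ent_refl x e0.
have d20 : 0 < d / 2 by rewrite divr_gt0.
exists (d / 2) => // y xy; exists (d / 2) => // s t /= xs yt.
apply: Wxx => /=; first lra.
by have := metric_triangle (act t x0) y x; rewrite (metric_sym y x); lra.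
Qed.

Lemma return_ent_act e g x y : return_ent e (x, y) -> return_ent e (act g x, act g y).
Proof.
move=> [d d0 Wxy].
have actNg_cont := act_continuous act_action (t := - g).
have [d1 d10 gx] := nbhs_mdist_sub (actNg_cont (act g x) _ (nbhs_mdist _ d0)).
have [d2 d20 gy] := nbhs_mdist_sub (actNg_cont (act g y) _ (nbhs_mdist _ d0)).
exists (Num.min d1 d2); first by rewrite lt_min d10 d20.
move=> s t /=; rewrite !lt_min => /andP[xs _] /andP[_ yt].
have -> : s - t = (s - g) - (t - g) by rewrite opprB addrA subrK.
apply: Wxy => /=; rewrite addrC actD //.
  by have /= := gx (act s x0); rewrite actNK // metric_sym => /(_ xs); rewrite metric_sym.
by have /= := gy (act t x0); rewrite actNK // metric_sym => /(_ yt); rewrite metric_sym.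
Qed.

Lemma return_ent_x0 e z : 0 < e -> return_ent e (z, x0) -> mdist z x0 < e + e.
Proof.
move=> e0 [d d0 Wz].
have [r] := orbit_approx z (ltac:(by rewrite lt_min d0 e0) : 0 < Num.min d e).
rewrite lt_min => /andP[zrd zre].
have := Wz r 0 zrd; rewrite act0 // mdistxx subr0 => /(_ d0).
have := metric_triangle z (act r x0) x0; rewrite metric_sym in zre.
rewrite /return_set /=; lra.
Qed.

Definition return_ents : set (set (X * X)) := [set b | exists2 e, 0 < e & b = return_ent e].

Lemma return_ents_nonempty : exists b, return_ents b.
Proof. by exists (return_ent 1); exists 1. Qed.

Lemma return_ents_meet b1 b2 : return_ents b1 -> return_ents b2 ->
  exists2 b, return_ents b & b `<=` b1 `&` b2.
Proof.
move=> [e1 e10 ->] [e2 e20 ->]; exists (return_ent (Num.min e1 e2)).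
  by exists (Num.min e1 e2) => //; rewrite lt_min e10 e20.
by move=> xy Wxy; split; apply: return_ent_le Wxy; rewrite ge_min lexx ?orbT.
Qed.

Lemma return_ents_refl b : return_ents b -> forall x, b (x, x).
Proof. by move=> [e e0 ->] x; exact: return_ent_refl. Qed.

Lemma return_ents_inv b : return_ents b ->
  exists2 b', return_ents b' & forall x y, b' (x, y) -> b (y, x).
Proof.
by move=> [e /return_ent_inv[e' e'0 W'e] ->]; exists (return_ent e') => //; exists e'.
Qed.

Lemma return_ents_split3 b : return_ents b -> exists2 b', return_ents b' &
  forall x y z w, b' (x, y) -> b' (y, z) -> b' (z, w) -> b (x, w).
Proof.
by move=> [e /return_ent_split3[e' e'0 W'e] ->]; exists (return_ent e') => //; exists e'.
Qed.

Definition return_base : diag_base X := DiagBase return_ents_nonempty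
  return_ents_meet return_ents_refl return_ents_inv return_ents_split3.

Definition return_quot := dbase_quot return_base.
Definition return_pi : X -> return_quot := dbase_pi return_base.
Definition return_rep (q : return_quot) : X := xget x0 (fun x => q = return_pi x).

Lemma return_repK q : return_pi (return_rep q) = q.
Proof. exact/esym/(xgetPex x0 (dbase_pi_surj q)). Qed.

Lemma return_piP x y :
  return_pi x = return_pi y <-> forall e, 0 < e -> return_ent e (x, y).
Proof.
rewrite dbase_piP; split => [xy e e0 | xy b [e e0 ->]]; last exact: xy.
by apply: xy; exists e.
Qed.

Definition return_quot_act (g : G) (q : return_quot) : return_quot :=
  return_pi (act g (return_rep q)).

Lemma return_quot_act_pi g x : return_quot_act g (return_pi x) = return_pi (act g x).
Proof.
apply/return_piP => e e0; apply: return_ent_act; move: e e0.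
by apply/return_piP; exact: return_repK.
Qed.

Lemma return_quot_entP (A : set (return_quot * return_quot)) : entourage A ->
  exists2 e, 0 < e & dbase_img (return_ent e) `<=` A.
Proof. by move=> [b [e e0 ->] sA]; exists e. Qed.

Lemma return_quot_ent e : 0 < e ->
  entourage (dbase_img (return_ent e) : set (return_quot * return_quot)).
Proof. by move=> e0; exists (return_ent e) => //; exists e. Qed.

Lemma return_img_sub e : 0 < e -> exists2 e', 0 < e' &
  forall x y, dbase_img (return_ent e') (return_pi x, return_pi y) -> return_ent e (x, y).
Proof.
move=> e0; have Be : dbase return_base (return_ent e) by exists e.
by have [_ [e' e'0 ->] W'e] := dbase_img_sub Be; exists e'.
Qed.

Lemma return_pi_continuous : continuous return_pi.
Proof.
move=> x; apply/cvg_app_entourageP => A /return_quot_entP[e e0 eA].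
have [eta eta0 Wx] := return_ent_nbhs x e0.
by apply: filterS (nbhs_mdist x eta0) => y /Wx ?; apply/eA/dbase_img_pi.
Qed.

Lemma return_quot_compact : compact [set: X] -> compact [set: return_quot].
Proof.
move=> cX; have -> : [set: return_quot] = return_pi @` [set: X].
  by apply/seteqP; split => q // _; have [x ->] := dbase_pi_surj q; exists x.
by apply: continuous_compact => //; exact: continuous_subspaceT return_pi_continuous.
Qed.

Lemma return_quot_action : is_action return_quot_act.
Proof.
split; first by move=> q; rewrite -(return_repK q) return_quot_act_pi act0.
split.
  by move=> s t q; rewrite -(return_repK q) !return_quot_act_pi actD.
move=> [g q]; rewrite -(return_repK q); set x := return_rep q.
apply/cvg_app_entourageP => A /return_quot_entP[e e0 eA].
have [e1 e10 W1e] := return_ent_split3 e0.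
have [e2 e20 W2e1] := return_img_sub e10.
have [eta eta0 Wgx] := return_ent_nbhs (act g x) e10.
have nU := orbit_map_continuous act_action (nbhs_mdist (act g x) eta0).
have nV := nbhs_entourage (return_pi x) (return_quot_ent e20).
exists (act^~ x @^-1` [set y | mdist (act g x) y < eta],
  xsection (dbase_img (return_ent e2)) (return_pi x)) => //.
move=> [h q'] /= [/Wgx Whx /xsectionP]; rewrite -(return_repK q').
move=> /W2e1 /(return_ent_act h) Whxy; rewrite !return_quot_act_pi.
apply/eA/dbase_img_pi; apply: (W1e _ (act h x) (act h x)) => //; exact: return_ent_refl.
Qed.

Lemma return_quot_equicontinuous : equicontinuous_action return_quot_act.
Proof.
move=> E /return_quot_entP[e e0 eE]; have [e' e'0 W'e] := return_img_sub e0.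
exists (dbase_img (return_ent e')); first exact: return_quot_ent.
move=> p q; rewrite -(return_repK p) -(return_repK q) => /W'e Wpq t.
by rewrite !return_quot_act_pi; apply/eE/dbase_img_pi/return_ent_act.
Qed.

Lemma return_quot_factor : compact [set: X] ->
  equicontinuous_factor act return_quot_act return_pi.
Proof.
move=> cX; split; first exact: return_quot_compact.
split; first exact: dquot_hausdorff.
split; first exact: return_quot_action.
split; first exact: return_quot_equicontinuous.
split; first exact: return_pi_continuous.
split; first by move=> q; exists (return_rep q); exact: return_repK.
by move=> t x; rewrite return_quot_act_pi.
Qed.

Lemma return_pi_fiber_x0 x : return_pi x = return_pi x0 -> x = x0.
Proof.
move/return_piP => Wx; apply/eqP/negPn/negP; rewrite -mdist_gt0 => d0.
have d40 : 0 < mdist x x0 / 4 by rewrite divr_gt0.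
by have := return_ent_x0 d40 (Wx _ d40); lra.
Qed.

Lemma return_ent_common_orbit_point e : 0 < e -> exists2 e', 0 < e' &
  forall x y, return_ent e' (x, y) ->
    exists s, return_ent e (x, act s x0) /\ return_ent e (y, act s x0).
Proof.
move=> e0; have [e1 e10 W1e] := return_ent_split3 e0.
have [e2 e20 W2e1] := return_ent_inv e10.
exists (Num.min e1 e2); first by rewrite lt_min e10 e20.
move=> x y Wxy; have [eta eta0 Wx] := return_ent_nbhs x e10.
have [s xs] := orbit_approx x eta0; rewrite metric_sym in xs.
have Wxx := return_ent_refl x e10; have Wxs := Wx _ xs.
exists s; split; first exact: (W1e _ _ _ _ Wxx Wxx Wxs).
by apply: (W1e y x x _ _ Wxx Wxs); apply: W2e1; apply: return_ent_le Wxy; rewrite ge_min lexx orbT.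
Qed.

Section Maximality.
Context (Z : uniformType) (actZ : G -> Z -> Z) (psi : X -> Z).
Hypothesis psi_factor : equicontinuous_factor act actZ psi.

(* Translating by -s brings x and y near x0, where continuity of psi at x0
   applies; equicontinuity carries the estimate back. *)
Lemma factor_return_uniform E : entourage E ->
  exists2 e, 0 < e & forall x y, return_ent e (x, y) -> E (psi x, psi y).
Proof.
case: psi_factor => _ [_ [[actZ0 [actZD _]] [equi [psi_cont [_ psi_act]]]]] entE.
have [D entD DE] := equi E entE; have [D1 entD1 D1D] := entourage_common_point entD.
have /cvg_app_entourageP/(_ D1 entD1)/nbhs_mdist_sub[eta eta0 psiD1] := psi_cont x0.
have eta20 : 0 < eta / 2 by rewrite divr_gt0.
have [e e0 We] := return_ent_common_orbit_point eta20.
exists e => // x y /We[s [Wxs Wys]].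
have near_x0 z : return_ent (eta / 2) (z, act s x0) -> D1 (psi x0, psi (act (- s) z)).
  move=> /(return_ent_act (- s)); rewrite actNK // => /(return_ent_x0 eta20) zx0.
  by apply: psiD1; rewrite metric_sym; lra.
have := DE _ _ (D1D _ _ _ (near_x0 _ Wxs) (near_x0 _ Wys)) s.
by rewrite !psi_act -!actZD subrr !actZ0.
Qed.

Definition factor_lift (q : return_quot) : Z := psi (return_rep q).

Lemma factor_liftE x : factor_lift (return_pi x) = psi x.
Proof.
case: psi_factor => _ [Z_hausdorff _].
rewrite /factor_lift -(closeE Z_hausdorff) entourage_close => A entA.
have [e e0 We] := factor_return_uniform entA; apply: We; move: e e0.
by apply/return_piP; exact: return_repK.
Qed.

Lemma factor_lift_factor : factor_map return_quot_act actZ factor_lift.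
Proof.
case: psi_factor => _ [_ [_ [_ [_ [psi_surj psi_act]]]]].
split.
  move=> q; rewrite -(return_repK q).
  apply/(@cvg_app_entourageP Z return_quot factor_lift (nbhs _) _).
  move=> A /factor_return_uniform[e e0 We].
  have [e' e'0 W'e] := return_img_sub e0.
  apply: filterS (nbhs_entourage _ (return_quot_ent e'0)) => q' /xsectionP.
  by rewrite -(return_repK q') => /W'e /We; rewrite !factor_liftE.
split; first by move=> z; have [x <-] := psi_surj z; exists (return_pi x); exact: factor_liftE.
by move=> t q; rewrite -(return_repK q) return_quot_act_pi !factor_liftE psi_act.
Qed.

End Maximality.

Lemma return_quot_maximal : compact [set: X] ->
  maximal_equicontinuous_factor act return_quot_act return_pi.
Proof.
move=> cX; split; first exact: return_quot_factor.
move=> Z actZ psi psi_factor; exists (factor_lift psi).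
by split; [exact: factor_lift_factor | move=> x; rewrite (factor_liftE psi_factor)].
Qed.

End ReturnUniformity.

Section AlmostAutomorphic.
Context (R : realType) (G : topologicalZmodType) (X : metricType R)
  (act : G -> X -> X) (x0 : X).
Hypothesis act_action : is_action act.
Hypothesis X_compact : compact [set: X].
Hypothesis x0_transitive : closure (range (fun t => act t x0)) = [set: X].
Context (Y : uniformType) (actY : G -> Y -> Y) (pi : X -> Y).
Hypothesis pi_factor : equicontinuous_factor act actY pi.
Hypothesis x0_aa : forall x, pi x = pi x0 -> x = x0.

Local Notation P := (return_set act x0).

Lemma pi_continuous : continuous pi. Proof. by case: pi_factor => _ [_ [_ [_ []]]]. Qed.
Lemma pi_act t x : pi (act t x) = actY t (pi x).
Proof. by case: pi_factor => _ [_ [_ [_ [_ []]]]]. Qed.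
Lemma actY_equicontinuous : equicontinuous_action actY.
Proof. by case: pi_factor => _ [_ [_ []]]. Qed.

Lemma fiber_x0_entourage e : 0 < e ->
  exists2 E, entourage E & forall x, E (pi x0, pi x) -> mdist x x0 < e.
Proof.
case: pi_factor => _ [Y_hausdorff _].
exact: (compact_fiber_entourage X_compact Y_hausdorff pi_continuous x0_aa).
Qed.

Lemma return_set_of_equicontinuity e : 0 < e -> exists2 D, entourage D &
  forall g k, D (pi (act k x0), pi (act g x0)) -> P e (g - k).
Proof.
move=> e0; have [E entE Ee] := fiber_x0_entourage e0.
have [D entD DE] := actY_equicontinuous entE; exists D => // g k kg.
have := DE _ _ kg (- k); rewrite -!pi_act actNK // -actD // addrC; exact: Ee.
Qed.

Lemma return_setB e : 0 < e -> exists2 d : R, 0 < d &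
  forall s t, P d s -> P d t -> P e (s - t).
Proof.
move=> e0; have [D entD De] := return_set_of_equicontinuity e0.
have [D1 entD1 D1D] := entourage_common_point entD.
have /cvg_app_entourageP/(_ D1 entD1)/nbhs_mdist_sub[d d0 x0D1] := @pi_continuous x0.
exists d => // s t Ps Pt; apply: De; apply: (D1D (pi x0)); apply: x0D1.
  by rewrite metric_sym.
by rewrite metric_sym.
Qed.

Lemma return_set_relatively_dense e : 0 < e -> relatively_dense (P e).
Proof.
move=> e0; have [D entD De] := return_set_of_equicontinuity e0.
have orbit_dense (y : Y) A : nbhs y A -> exists k, A (pi (act k x0)).
  case: pi_factor => _ [_ [_ [_ [_ [pi_surj _]]]]]; have [x <-] := pi_surj y.
  move=> /pi_continuous xA; have : closure (range (fun t => act t x0)) x.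
    by rewrite x0_transitive.
  by move=> /(_ _ xA)[_ [[k _ <-] kA]]; exists k.
case: pi_factor => Y_compact _.
have [K fK Knet] := compact_finite_net Y_compact orbit_dense entD.
exists K; split; first exact: finite_compact.
move=> g; have [k Kk kg] := Knet (pi (act g x0)).
by exists (g - k), k; rewrite subrK; split => //; exact: De.
Qed.

End AlmostAutomorphic.

Theorem theorem5p1 (R : realType) (G : topologicalZmodType) (X : metricType R)
  (act : G -> X -> X) (x0 : X) :
  hausdorff_space G -> locally_compact [set: G] ->
  compact [set: X] ->
  is_action act ->
  closure (range (fun t => act t x0)) = [set: X] ->
  ((forall eps : R, 0 < eps -> relatively_dense (return_set act x0 eps)) /\
   (forall eps : R, 0 < eps -> exists2 delta : R, 0 < delta &
      forall s t, return_set act x0 delta s -> return_set act x0 delta t ->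
        return_set act x0 eps (s - t)))
  <->
  (exists (Y : uniformType) (actY : G -> Y -> Y) (pi : X -> Y),
     maximal_equicontinuous_factor act actY pi /\
     (forall x, pi x = pi x0 -> x = x0)).
Proof.
move=> _ _ X_compact act_action x0_transitive; split.
  move=> [return_dense return_sub]; do 3 eexists; split.
    exact: (return_quot_maximal act_action x0_transitive return_dense return_sub X_compact).
  exact: return_pi_fiber_x0.
move=> [Y [actY [pi [[pi_factor _] x0_aa]]]]; split => e e0.
  exact: (return_set_relatively_dense act_action X_compact x0_transitive pi_factor x0_aa e0).
exact: (return_setB act_action X_compact pi_factor x0_aa e0).
Qed.
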